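(* Let $n\ge 1$, let $d>1$ be a divisor of $n$, and let $\mathcal{S}$ be a primitive Schur ring over the cyclic group $\mathbb{Z}_d$, regarded as the unique subgroup of order $d$ of $\mathbb{Z}_n$. Then the number $\Omega(n,\mathcal{S})$ of Schur rings over $\mathbb{Z}_n$ whose wedge-core is $\mathcal{S}$ equals $\Omega(n/d)$, the number of Schur rings over $\mathbb{Z}_{n/d}$.
   Context: $\mathbb{Z}_n=\langle z\rangle$ denotes the cyclic group of order $n$ written multiplicatively. A subset $C\subseteq G$ is identified with $\sum_{g\in C}g\in\mathbb{Q}[G]$, and $C^*=\{x^{-1}:x\in C\}$. A Schur ring over a finite group $G$ is the $\mathbb{Q}$-span of the elements $C_1,\dots,C_r$ of a partition $\{C_1,\dots,C_r\}$ of $G$ such that $C_1=\{1\}$, each $C_i^*$ is some $C_j$, and each product $C_iC_j$ is a nonnegative-integer combination of the $C_k$; the $C_i$ are the primitive sets (classes) of the Schur ring. $\Omega(n)$ denotes the number of Schur rings over $\mathbb{Z}_n$. For a Schur ring $\mathcal{S}$ over $G$, an $\mathcal{S}$-subgroup is a subgroup of $G$ that is a union of classes of $\mathcal{S}$; $\mathcal{S}$ is primitive if its only $\mathcal{S}$-subgroups are $1$ and $G$. For an $\mathcal{S}$-subgroup $H$, $\mathcal{S}_H$ is the Schur ring over $H$ spanned by the classes of $\mathcal{S}$ contained in $H$. An $\mathcal{S}$-section is a pair $[K,H]$ of $\mathcal{S}$-subgroups with $1\le K\le H\le G$, $K$ normal in $G$; it is proper if $1<K\le H<G$. $\mathcal{S}$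 is wedge-decomposable if there is a proper $\mathcal{S}$-section $[K,H]$ such that every class of $\mathcal{S}$ is either contained in $H$ or is a union of cosets of $K$; otherwise it is wedge-indecomposable. Let $\omega:\mathbb{Q}[\mathbb{Z}_n]\to\mathbb{Q}(\zeta_n)$ be the algebra map determined by $z\mapsto\zeta_n$, a primitive complex $n$th root of unity. The wedge-core of a Schur ring $\mathcal{S}$ over $\mathbb{Z}_n$ is the Schur subring $\mathcal{S}_H$, where $H$ is the largest $\mathcal{S}$-subgroup such that $\mathcal{S}_H$ is wedge-indecomposable and $\omega(\mathcal{S}_H)=\omega(\mathcal{S})$. $\Omega(n,\mathcal{S})$ denotes the number of Schur rings over $\mathbb{Z}_n$ whose wedge-core is $\mathcal{S}$. *)

(* Z_n (written multiplicatively in the paper, z^k) is modelled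
   additively by 'I_n = {0,...,n-1} with addition (x + y) mod n; z^k <-> k. *)
From mathcomp Require Import all_boot all_order all_algebra all_field.
From Stdlib Require Import ClassicalEpsilon.
Set Implicit Arguments. Unset Strict Implicit. Unset Printing Implicit Defensive.
Import GRing.Theory Num.Theory.

Definition pb (P : Prop) : bool :=
  if excluded_middle_informative P then true else false.

Section ZnDefs.
Variable n : nat.
Local Notation Z := ('I_n).

Definition one_set : {set Z} := [set x : Z | val x == 0%N].

Definition inv_set (C : {set Z}) : {set Z} :=
  [set x : Z | [exists y in C, val x == (n - val y) %% n]].

(* coefficient of g in the group-ring product C*D *)
Definition coef (C D : {set Z}) (g : Z) : nat :=
  #|[set p : Z * Z | [&& p.1 \in C, p.2 \in D & val g == (val p.1 + val p.2) %% n]]|.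

(* P (the set of classes) defines a Schur ring over the subgroup H of Z_n:
   partition of H, {1} is a class, closed under *, and every product C_i C_j
   is a nonnegative-integer combination of classes, i.e. its coefficients
   vanish outside H and are constant on each class. *)
Definition is_schur (H : {set Z}) (P : {set {set Z}}) : Prop :=
  [/\ partition P H,
      one_set \in P,
      (forall C, C \in P -> inv_set C \in P),
      (forall C D g, C \in P -> D \in P -> g \notin H -> coef C D g = 0%N) &
      (forall C D E g h, C \in P -> D \in P -> E \in P -> g \in E -> h \in E ->
         coef C D g = coef C D h)].

Definition is_subgroup (H : {set Z}) : Prop :=
  [/\ one_set \subset H,
      (forall x y z : Z, x \in H -> y \in H -> val z = (val x + val y) %% n -> z \in H) &
      (forall x z : Z, x \in H -> val z = (n - val x) %% n -> z \in H)].

Definition s_subgroup (P : {set {set Z}}) (H : {set Z}) : Prop :=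
  is_subgroup H /\ H = \bigcup_(C in P | C \subset H) C.

Definition restr (P : {set {set Z}}) (H : {set Z}) : {set {set Z}} :=
  [set C in P | C \subset H].

Definition primitive (G : {set Z}) (P : {set {set Z}}) : Prop :=
  forall H, s_subgroup P H -> H = one_set \/ H = G.

Definition union_cosets (K C : {set Z}) : Prop :=
  forall x y z : Z, x \in C -> y \in K -> val z = (val x + val y) %% n -> z \in C.

(* wedge-decomposability of a Schur ring P over G (Z_n abelian: all normal) *)
Definition wedge_dec (G : {set Z}) (P : {set {set Z}}) : Prop :=
  exists K L : {set Z},
    [/\ s_subgroup P K, s_subgroup P L, K != one_set, K \subset L & L != G] /\
        (forall C, C \in P -> C \subset L \/ union_cosets K C).

Definition zeta : algC :=
  let: exist z _ := C_prim_root_exists (ltn0Sn n.-1) in z.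

Definition omega (C : {set Z}) : algC := (\sum_(x in C) zeta ^+ val x)%R.

Definition in_omega_span (x : algC) (Q : {set {set Z}}) : Prop :=
  exists c : {ffun {set Z} -> rat}, x = (\sum_(D in Q) ratr (c D) * omega D)%R.

(* omega(span P) = omega(span Q) *)
Definition omega_eq (P Q : {set {set Z}}) : Prop :=
  (forall C, C \in P -> in_omega_span (omega C) Q) /\
  (forall C, C \in Q -> in_omega_span (omega C) P).

Definition core_cand (P : {set {set Z}}) (H : {set Z}) : Prop :=
  [/\ s_subgroup P H, ~ wedge_dec H (restr P H) & omega_eq (restr P H) P].

(* H is the largest S-subgroup with S_H wedge-indecomposable and
   omega(S_H) = omega(S); the wedge-core is then restr P H *)
Definition wedge_core_grp (P : {set {set Z}}) (H : {set Z}) : Prop :=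
  core_cand P H /\ forall H', core_cand P H' -> H' \subset H.

End ZnDefs.

Definition Omega (n : nat) : nat :=
  #|[set P : {set {set 'I_n}} | pb (is_schur [set: 'I_n] P)]|.

Definition embset (n d : nat) (C : {set 'I_d}) : {set 'I_n} :=
  [set x : 'I_n | [exists k : 'I_d, (k \in C) && (val x == val k * (n %/ d))%N]].

Definition embed (n d : nat) (S : {set {set 'I_d}}) : {set {set 'I_n}} :=
  [set embset n C | C in S].

Definition Omega_core (n d : nat) (S : {set {set 'I_d}}) : nat :=
  #|[set P : {set {set 'I_n}} | pb (is_schur [set: 'I_n] P /\
      exists H, wedge_core_grp P H /\ restr P H = embed n S)]|.

From mathcomp Require Import all_boot all_order all_algebra all_field.
From Stdlib Require Import ClassicalEpsilon.
Set Implicit Arguments. Unset Strict Implicit. Unset Printing Implicit Defensive.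
Import GRing.Theory Num.Theory.

(* Write n = d m, let Hd be the subgroup of order d of Z_n and red : Z_n -> Z_m
   the reduction map.  For a Schur ring T over Z_m, the wedge product of S
   (placed on Hd) with T, whose classes are those of S together with the
   preimages under red of the non-identity classes of T, is a Schur ring over
   Z_n with wedge-core S: omega vanishes on every union of cosets of a
   nontrivial subgroup, so the preimage classes do not contribute to its image.
   Conversely, let P have wedge-core S.  Primitivity of S forces the core
   subgroup to be Hd, and every class of P outside Hd must be a union of
   Hd-cosets: otherwise, descending from Z_n along wedge decompositions, which
   preserve the omega-image for the same reason, one reaches a
   wedge-indecomposable P-subgroup not contained in Hd, against the maximality
   of the core.  So P is the wedge product of S with its image under red, and
   T |-> (wedge product of S and T) is a bijection onto the rings counted by
   Omega(n, S). *)

Lemma pbP (P : Prop) : reflect P (pb P).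
Proof. by rewrite /pb; case: excluded_middle_informative => h; constructor. Qed.

Section Partition.
Variable T : finType.
Implicit Types (P : {set {set T}}) (B C X : {set T}).

Lemma partition_setTP P :
  reflect [/\ set0 \notin P, (forall x, exists2 B, B \in P & x \in B) &
             (forall B C x, B \in P -> C \in P -> x \in B -> x \in C -> B = C)]
          (partition P setT).
Proof.
apply: (iffP and3P) => [[/eqP cov /trivIsetP tri n0]|[n0 ex un]].
  split=> // [x|B C x BP CP xB xC].
    have : x \in cover P by rewrite cov inE.
    by case/bigcupP => B BP xB; exists B.
  case: (eqVneq B C) => // neq.
  by rewrite (disjointFr (tri B C BP CP neq) xB) in xC.
split=> //.
  rewrite eqEsubset subsetT /=; apply/subsetP => x _.
  by case: (ex x) => B BP xB; apply/bigcupP; exists B.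
apply/trivIsetP => B C BP CP neq; rewrite disjoints_subset.
apply/subsetP => x xB; rewrite inE; apply/negP => xC.
by move/eqP: neq; apply; apply: un xB xC.
Qed.

Definition class_closed P X :=
  forall x C, x \in X -> C \in P -> x \in C -> C \subset X.

Lemma class_closedI P X Y :
  class_closed P X -> class_closed P Y -> class_closed P (X :&: Y).
Proof.
move=> cX cY x C; rewrite inE => /andP[xX xY] CP xC.
by rewrite subsetI (cX x C) ?(cY x C).
Qed.

Variable P : {set {set T}}.
Hypothesis partP : partition P setT.

Lemma class_exists x : exists2 C, C \in P & x \in C.
Proof. by case/partition_setTP: partP => _ h _; apply: h. Qed.

Lemma class_uniq C D x : C \in P -> D \in P -> x \in C -> x \in D -> C = D.
Proof. by case/partition_setTP: partP => _ _ h; apply: h. Qed.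

Lemma class_nonempty C : C \in P -> exists x, x \in C.
Proof.
move=> CP; have [C0|[x xC]] := set_0Vmem C; last by exists x.
by case/partition_setTP: partP; rewrite -C0 CP.
Qed.

Lemma mem_class_eq B E a b : B \in P -> E \in P -> a \in E -> b \in E ->
  (a \in B) = (b \in B).
Proof.
move=> BP EP aE bE; apply/idP/idP => h.
  by rewrite (class_uniq BP EP h aE).
by rewrite (class_uniq BP EP h bE).
Qed.

End Partition.

Section CyclicGroup.
Variable p : nat.
Local Notation N := p.+1.
Local Notation Z := 'I_N.
Implicit Types (x y z : Z) (C D X Y H K L M : {set Z}) (P Q : {set {set Z}}).

Lemma one_setE : one_set N = [set 0%R].
Proof. by apply/setP=> x; rewrite !inE; apply/eqP/eqP => [h|->//]; apply: val_inj. Qed.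

Lemma inv_setE C : inv_set C = [set x | (- x)%R \in C].
Proof.
apply/setP=> x; rewrite !inE; apply/existsP/idP => [[y /andP[yC /eqP e]]|xC].
  rewrite (_ : (- x)%R = y) //.
  apply/eqP; rewrite -(subr_eq0 _ y) -opprD oppr_eq0; apply/eqP/val_inj.
  by rewrite -[val _]/((val x + val y) %% N) e modnDml subnK ?modnn //; exact: ltnW (ltn_ord y).
by exists (- x)%R; rewrite xC /=; apply/eqP; rewrite -[RHS]/(val (- - x)%R) opprK.
Qed.

Lemma inv_setK C : inv_set (inv_set C) = C.
Proof. by apply/setP => x; rewrite !inv_setE !inE opprK. Qed.

Lemma inv_set_one : inv_set (one_set N) = one_set N.
Proof. by apply/setP => x; rewrite inv_setE one_setE !inE oppr_eq0. Qed.

Lemma coefE C D g : coef C D g = #|[set x | (x \in C) && ((g - x)%R \in D)]|.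
Proof.
rewrite /coef -(card_imset _ (f := fun x => (x, g - x)%R)); last by move=> x y [].
apply: eq_card => -[x y]; rewrite in_set /= -[_ %% N]/(val (x + y)%R).
apply/and3P/imsetP => [[xC yD /eqP/val_inj ->]|[z]].
  by exists x; rewrite ?inE ?xC (addrC x) addrK ?yD.
by rewrite inE => /andP[zC zD] [-> ->]; split; rewrite // addrC subrK.
Qed.

Lemma coefC C D g : coef C D g = coef D C g.
Proof.
rewrite !coefE -(card_imset _ (f := fun x => (g - x)%R)); last first.
  by move=> x y /= /addrI /oppr_inj.
apply: eq_card => x; rewrite in_set; apply/imsetP/andP => [[y]|[xD gx]].
  by rewrite inE => /andP[yC yD] ->; rewrite yD opprB addrC subrK.
exists (g - x)%R; last by rewrite opprB addrC subrK.
by rewrite inE gx opprB addrC subrK xD.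
Qed.

Lemma coef_one_set D g : coef (one_set N) D g = (g \in D : nat).
Proof.
rewrite coefE one_setE; case: (boolP (g \in D)) => gD /=.
  rewrite -(cards1 (0%R : Z)); apply: eq_card => x; rewrite !inE.
  by case: eqP => // ->; rewrite subr0 gD.
apply/eqP; rewrite cards_eq0; apply/eqP/setP => x; rewrite !inE.
by case: eqP => // ->; rewrite subr0 (negbTE gD).
Qed.

Lemma is_subgroupP H : is_subgroup H <->
  [/\ 0%R \in H, (forall x y, x \in H -> y \in H -> (x + y)%R \in H) &
      (forall x, x \in H -> (- x)%R \in H)].
Proof.
split=> [[h1 h2 h3]|[h1 h2 h3]].
  split=> [|x y xH yH|x xH]; [|exact: (h2 x y)|exact: (h3 x)].
  by apply: (subsetP h1); rewrite one_setE inE.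
split=> [|x y z xH yH e|x z xH e]; first by rewrite one_setE sub1set.
  by rewrite (_ : z = x + y)%R; [exact: h2 | apply: val_inj].
by rewrite (_ : z = - x)%R; [exact: h3 | apply: val_inj].
Qed.

Lemma union_cosetsP K C : union_cosets K C <->
  (forall x y, x \in C -> y \in K -> (x + y)%R \in C).
Proof.
split=> [h x y xC yK|h x y z xC yK e]; first exact: (h x y).
by rewrite (_ : z = x + y)%R; [exact: h | apply: val_inj].
Qed.

Lemma union_cosetsS H K C : H \subset K -> union_cosets K C -> union_cosets H C.
Proof.
move=> HK /union_cosetsP uc; apply/union_cosetsP => x y xC yH.
exact/uc/(subsetP HK).
Qed.

Lemma subgroupI K L : is_subgroup K -> is_subgroup L -> is_subgroup (K :&: L).
Proof.
move=> /is_subgroupP[a1 a2 a3] /is_subgroupP[b1 b2 b3]; apply/is_subgroupP.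
split=> [|x y|x]; rewrite !inE ?a1 ?b1 // => /andP[xK xL].
  by move=> /andP[yK yL]; rewrite a2 ?b2.
by rewrite a3 ?b3.
Qed.

Lemma subgroup_neq1 K : is_subgroup K -> K != one_set N ->
  exists2 k, k \in K & k != 0%R.
Proof.
move=> /is_subgroupP[K0 _ _] K1.
apply/exists_inP; apply: contraR K1; rewrite negb_exists_in => /forall_inP h.
rewrite one_setE eqEsubset sub1set K0 andbT; apply/subsetP => x xK.
by rewrite inE -[_ == _]negbK h.
Qed.

Lemma subgroup_shift_subset K C h : is_subgroup K -> h \in K ->
  (forall k, k \in C -> (h + k)%R \in K) -> C \subset K.
Proof.
move=> /is_subgroupP[_ a2 a3] hK hC; apply/subsetP => k kC.
by have := a2 _ _ (a3 _ hK) (hC k kC); rewrite addKr.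
Qed.

(* The coset [y + X] lies in [C], hence [X] lies in [Y]. *)
Lemma union_cosets_meet1 X Y C y : is_subgroup X -> is_subgroup Y ->
  X :&: Y = one_set N -> C \subset Y -> y \in C -> union_cosets X C ->
  X = one_set N.
Proof.
move=> gX gY XY1 CY yC /union_cosetsP uc.
have XY : X \subset Y.
  apply: (subgroup_shift_subset (h := y)) => [//||x xX]; first exact: subsetP yC.
  exact/(subsetP CY)/uc.
by rewrite -XY1; apply/setP => x; rewrite inE; case: (boolP (x \in X)) => // /(subsetP XY).
Qed.

Lemma zeta_prim : (N.-primitive_root (zeta N))%R.
Proof. by rewrite /zeta; case: C_prim_root_exists. Qed.

Lemma omega_translate_invariant C k : k != 0%R ->
  (forall x, x \in C -> (x + k)%R \in C) -> omega C = 0%R.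
Proof.
move=> k0 hC; have kinj : injective (fun x : Z => x + k)%R by apply: addIr.
have Ck : [set (x + k)%R | x in C] = C.
  apply/eqP; rewrite eqEcard card_imset // leqnn andbT.
  by apply/subsetP => y /imsetP[x xC ->]; apply: hC.
have e : omega C = (zeta N ^+ val k * omega C)%R.
  rewrite /omega -{1}Ck big_imset /=; last by move=> x y _ _; apply: kinj.
  rewrite mulr_sumr; apply: eq_bigr => x _.
  by rewrite (prim_expr_mod zeta_prim) -exprD addnC.
have : ((1 - zeta N ^+ val k) * omega C)%R = 0%R by rewrite mulrBl mul1r -e subrr.
move/eqP; rewrite mulf_eq0 subr_eq0 eq_sym -(prim_order_dvd zeta_prim).
case/orP=> [/dvdn_leq|/eqP //].
have kpos : 0 < val k by rewrite lt0n; apply: contra k0 => /eqP k0'; apply/eqP/val_inj.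
by move/(_ kpos); rewrite leqNgt ltn_ord.
Qed.

Lemma omega_union_cosets K C : is_subgroup K -> K != one_set N ->
  union_cosets K C -> omega C = 0%R.
Proof.
move=> gK K1 /union_cosetsP uc; have [k kK k0] := subgroup_neq1 gK K1.
by apply: (omega_translate_invariant k0) => x xC; apply: uc.
Qed.

Lemma in_omega_span_mem C Q : C \in Q -> in_omega_span (omega C) Q.
Proof.
move=> CQ; exists [ffun D => ((D == C)%:R)%R]; rewrite (bigD1 C) //= ffunE eqxx.
rewrite big1 ?addr0 ?rmorph1 ?mul1r // => D /andP[_ /negbTE DC].
by rewrite ffunE DC rmorph0 mul0r.
Qed.

Lemma in_omega_span0 Q : in_omega_span 0%R Q.
Proof. by exists [ffun D => 0%R]; rewrite big1 // => D _; rewrite ffunE rmorph0 mul0r. Qed.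

Lemma schur_class0 P C : is_schur setT P -> C \in P -> 0%R \in C -> C = one_set N.
Proof.
case=> pP oP _ _ _ CP C0; apply: (class_uniq pP CP oP C0).
by rewrite one_setE inE.
Qed.

Section SchurPartition.
Variable P : {set {set Z}}.
Hypothesis partP : partition P setT.

Lemma s_subgroupP X : s_subgroup P X <-> is_subgroup X /\ class_closed P X.
Proof.
split=> [[gX eX]|[gX cX]]; split=> //.
  move=> x C xX CP xC; move: xX; rewrite {1}eX => /bigcupP[D /andP[DP DX] xD].
  by rewrite (class_uniq partP CP DP xC xD).
apply/setP => x; apply/idP/bigcupP => [xX|[C /andP[CP CX] xC]].
  by case: (class_exists partP x) => C CP xC; exists C; rewrite ?CP ?(cX x C).
exact: (subsetP CX).
Qed.

Lemma s_subgroup_restrP L K : s_subgroup (restr P L) K <->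
  [/\ is_subgroup K, class_closed P K & K \subset L].
Proof.
split=> [[gK eK]|[gK cK KL]].
  have KL : K \subset L.
    by rewrite eK; apply/bigcupsP => C; rewrite inE => /andP[/andP[_ CL] _].
  split=> // x C xK CP xC.
  move: xK; rewrite {1}eK => /bigcupP[D]; rewrite inE => /andP[/andP[DP _] DK] xD.
  by rewrite (class_uniq partP CP DP xC xD).
split=> //; apply/setP => x; apply/idP/bigcupP => [xK|[C /andP[CP CX] xC]].
  case: (class_exists partP x) => C CP xC; exists C => //.
  by rewrite inE CP /= (cK x C) // (subset_trans (cK x C xK CP xC) KL).
exact: (subsetP CX).
Qed.

Lemma omega_eq_restrS L M : omega_eq (restr P L) P -> M \subset L ->
  (forall C, C \in restr P L -> ~~ (C \subset M) -> omega C = 0%R) ->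
  omega_eq (restr P M) P.
Proof.
move=> [_ oL] ML om0; split=> [C|C CP].
  by rewrite inE => /andP[CP _]; apply: in_omega_span_mem.
case: (oL C CP) => c ->; exists c.
rewrite (big_setID (restr P M)) /= [X in (_ + X)%R]big1 ?addr0.
  apply: eq_bigl => D; rewrite !inE andbC.
  by case: (D \in P) (boolP (D \subset M)) => [] [DM|] //=; rewrite (subset_trans DM).
move=> D; rewrite !inE => /andP[nDM /andP[DP DL]].
by rewrite om0 ?mulr0 ?inE ?DP //; apply: contra nDM => ->; rewrite DP.
Qed.

Lemma meet1_class_not_cosets X Y Z :
  is_subgroup X -> X != one_set N -> X :&: Y = one_set N ->
  is_subgroup Y -> class_closed P Y -> Y != one_set N -> Y :&: Z = one_set N ->
  exists2 C, C \in P & [/\ C \subset Y, ~~ (C \subset Z) & ~ union_cosets X C].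
Proof.
move=> gX X1 XY1 gY cY Y1 YZ1; have [y yY y0] := subgroup_neq1 gY Y1.
case: (class_exists partP y) => C CP yC; have CY := cY y C yY CP yC.
exists C => //; split=> //.
  apply: contra y0 => /subsetP/(_ y yC) yZ.
  have : y \in Y :&: Z by rewrite inE yY.
  by rewrite YZ1 one_setE inE.
by move/(union_cosets_meet1 gX gY XY1 CY yC) => X1'; rewrite X1' eqxx in X1.
Qed.

Section CosetsOutsideCore.
Variable H : {set Z}.
Hypothesis sH : s_subgroup P H.
Hypothesis H1 : H != one_set N.
Hypothesis primH : forall X, is_subgroup X -> X \subset H -> class_closed P X ->
  X = one_set N \/ X = H.

Let gH : is_subgroup H. Proof. by case/s_subgroupP: sH. Qed.
Let cH : class_closed P H. Proof. by case/s_subgroupP: sH. Qed.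

Lemma meet1_or_sub K : is_subgroup K -> class_closed P K ->
  H :&: K = one_set N \/ H \subset K.
Proof.
move=> gK cK.
case: (primH (subgroupI gH gK) (subsetIl _ _) (class_closedI cH cK)) => [|HK];
  by [left | right; rewrite -HK subsetIr].
Qed.

Lemma wedge_meet1_proper L K M :
  is_subgroup K -> class_closed P K -> K != one_set N -> H :&: K = one_set N ->
  is_subgroup M -> class_closed P M -> K \subset M -> H \subset L ->
  (forall C, C \in P -> C \subset L -> ~~ (C \subset M) -> union_cosets K C) ->
  H \proper M.
Proof.
move=> gK cK K1 HK1 gM cM KM HL dec.
have KH1 : K :&: H = one_set N by rewrite setIC.
have HM : H \subset M.
  case: (meet1_or_sub gM cM) => // HM1.
  have [C CP [CH CM ncos]] := meet1_class_not_cosets gK K1 KH1 gH cH H1 HM1.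
  by case: ncos; apply: dec CP (subset_trans CH HL) CM.
rewrite properEneq HM andbT; apply/negP => /eqP HeqM; move/negP: K1; apply.
by rewrite -KH1 eq_sym; apply/eqP/setIidPl; rewrite HeqM.
Qed.

Lemma larger_core_cand_or_cosets L : s_subgroup P L -> H \proper L ->
  omega_eq (restr P L) P ->
  (exists2 H', core_cand P H' & ~~ (H' \subset H)) \/
  (forall C, C \in P -> C \subset L -> ~~ (C \subset H) -> union_cosets H C).
Proof.
have [k] := ubnP #|L|; elim: k L => // k IH L /ltnSE-leLk sL HL oL.
have [wL|nwL] := classic (wedge_dec L (restr P L)); last first.
  left; exists L; first by split.
  by apply: contraL HL => LH; rewrite properE LH andbF.
case: wL => K [M [[sK sM K1 KM nML] dec]].
case/s_subgroup_restrP: sK => gK cK KL; case/s_subgroup_restrP: sM => gM cM ML.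
have sMP : s_subgroup P M by apply/s_subgroupP.
have ltMk : #|M| < k.
  by apply: leq_trans leLk; apply: proper_card; rewrite properEneq ML nML.
have decP C : C \in P -> C \subset L -> ~~ (C \subset M) -> union_cosets K C.
  move=> CP CL CM; have : C \in restr P L by rewrite inE CP.
  by case/dec => // CM'; rewrite CM' in CM.
have oM : omega_eq (restr P M) P.
  apply: omega_eq_restrS oL ML _ => C; rewrite inE => /andP[CP CL] CM.
  exact: omega_union_cosets gK K1 (decP C CP CL CM).
have HsubL := proper_sub HL.
case: (meet1_or_sub gK cK) => [HK1|HK].
  have HM := wedge_meet1_proper gK cK K1 HK1 gM cM KM HsubL decP.
  case: (IH M ltMk sMP HM oM) => [|cosM]; first by left.
  have KH1 : K :&: H = one_set N by rewrite setIC.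
  have [C CP [CK CH ncos]] := meet1_class_not_cosets gH H1 HK1 gK cK K1 KH1.
  by case: ncos; apply: cosM CP (subset_trans CK KM) CH.
have cosL C : C \in P -> C \subset L -> ~~ (C \subset M) -> union_cosets H C.
  by move=> CP CL CM; apply: union_cosetsS HK (decP C CP CL CM).
have [eHM|HM] := eqVneq H M.
  by right=> C CP CL CH; apply: cosL; rewrite -?eHM.
have HpM : H \proper M by rewrite properEneq HM (subset_trans HK KM).
case: (IH M ltMk sMP HpM oM) => [|cosM]; first by left.
right=> C CP CL CH; have [CM|] := boolP (C \subset M); first exact: cosM.
exact: cosL.
Qed.

Lemma cosets_outside_core : (forall H', core_cand P H' -> H' \subset H) ->
  forall C, C \in P -> ~~ (C \subset H) -> union_cosets H C.
Proof.
move=> Hmax C CP CH.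
have sT : s_subgroup P setT.
  by apply/s_subgroupP; split=> [|x D _ _ _]; [apply/is_subgroupP; split=> *; rewrite inE | exact: subsetT].
have HT : H \proper setT by rewrite properT; apply: contraNneq CH => ->; apply: subsetT.
have rT : restr P setT = P by apply/setP => D; rewrite inE subsetT andbT.
have oT : omega_eq (restr P setT) P by rewrite rT; split=> D; apply: in_omega_span_mem.
case: (larger_core_cand_or_cosets sT HT oT) => [[H' /Hmax ->] //|cos].
by apply: cos => //; apply: subsetT.
Qed.

End CosetsOutsideCore.
End SchurPartition.
End CyclicGroup.

Section Quotient.
Variables n' m' d' : nat.
Hypothesis en : n'.+1 = (d'.+1 * m'.+1)%N.
Hypothesis d_gt1 : (0 < d')%N.
Local Notation N := n'.+1.
Local Notation M := m'.+1.
Local Notation Dd := d'.+1.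
Local Notation ZN := 'I_N.
Local Notation ZM := 'I_M.
Local Notation ZD := 'I_Dd.
Implicit Types (x y : ZN) (a : ZM) (k : ZD).

Definition red x : ZM := inZp (val x).
Definition emb k : ZN := inZp (val k * M).
Definition Hd : {set ZN} := emb @: setT.
Definition lift (C : {set ZM}) : {set ZN} := red @^-1: C.

Lemma dvdn_MN : (M %| N)%N. Proof. by rewrite en dvdn_mull. Qed.

Lemma divn_ND : (N %/ Dd)%N = M. Proof. by rewrite en mulKn. Qed.

Lemma red_add x y : red (x + y)%R = (red x + red y)%R.
Proof. by apply: ord_inj; rewrite /= (modn_dvdm _ dvdn_MN) modnDm. Qed.

Lemma red0 : red 0%R = 0%R. Proof. by apply: ord_inj; rewrite /= mod0n. Qed.

Lemma red_opp x : red (- x)%R = (- red x)%R.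
Proof. by apply/eqP; rewrite -subr_eq0 opprK -red_add addNr red0. Qed.

Lemma red_sub x y : red (x - y)%R = (red x - red y)%R.
Proof. by rewrite red_add red_opp. Qed.

Lemma red_inZp a : red (inZp (val a)) = a.
Proof.
have aN : (a < N)%N by apply: leq_trans (ltn_ord a) _; rewrite en leq_pmull.
by apply: ord_inj; rewrite /= (modn_small aN) modn_small.
Qed.

Lemma emb_val k : val (emb k) = (val k * M)%N.
Proof. by rewrite /= modn_small // en ltn_mul2r ltn_ord. Qed.

Lemma emb_inj : injective emb.
Proof.
by move=> k l /(congr1 val) /eqP; rewrite !emb_val eqn_mul2r => /eqP/ord_inj.
Qed.

Lemma emb_add k l : emb (k + l)%R = (emb k + emb l)%R.
Proof. by apply: val_inj => /=; rewrite modnDm muln_modl -en mulnDl modn_mod. Qed.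

Lemma emb0 : emb 0%R = 0%R. Proof. by apply: val_inj; rewrite emb_val. Qed.

Lemma emb_opp k : emb (- k)%R = (- emb k)%R.
Proof. by apply/eqP; rewrite -subr_eq0 opprK -emb_add addNr emb0. Qed.

Lemma red_emb k : red (emb k) = 0%R.
Proof. by apply: ord_inj; change (val (emb k) %% M = 0 %% M)%N; rewrite emb_val modnMl. Qed.

Lemma red_eq0P x : reflect (exists k, x = emb k) (red x == 0%R).
Proof.
apply: (iffP eqP) => [/(congr1 val) /= /eqP|[k ->]]; last exact: red_emb.
rewrite -/(dvdn M x) => /dvdnP[k ek].
have kD : (k < Dd)%N by rewrite -(ltn_pmul2r (ltn0Sn m')) -ek -en ltn_ord.
by exists (Ordinal kD); apply: val_inj; rewrite emb_val; exact: ek.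
Qed.

Lemma red_eq_translate x y : red x = red y -> exists k, x = (y + emb k)%R.
Proof.
move=> h; have : red (x - y)%R == 0%R by rewrite red_sub h subrr.
by case/red_eq0P => k ek; exists k; rewrite -ek addrC subrK.
Qed.

Lemma card_red_fiber a : #|[set x | red x == a]| = Dd.
Proof.
rewrite -[Dd]card_ord -(card_imset _ (inj_comp (addrI (inZp (val a) : ZN)) emb_inj)).
apply: eq_card => x; rewrite inE; apply/eqP/imsetP => [ex|[k _ ->]].
  by have [k ->] := red_eq_translate (etrans ex (esym (red_inZp a))); exists k.
by rewrite /= red_add red_emb addr0 red_inZp.
Qed.

Lemma mem_emb (C : {set ZD}) k : (emb k \in emb @: C) = (k \in C).
Proof. exact/mem_imset/emb_inj. Qed.

Lemma mem_Hd x : (x \in Hd) = (red x == 0%R).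
Proof.
apply/imsetP/red_eq0P => [[k _ ->]|[k ->]]; by exists k.
Qed.

Lemma emb_Hd k : emb k \in Hd. Proof. exact: imset_f. Qed.

Lemma embsetE (C : {set ZD}) : embset N C = emb @: C.
Proof.
apply/setP => x; rewrite inE divn_ND.
apply/existsP/imsetP => [[k /andP[kC /eqP ex]]|[k kC ->]].
  by exists k => //; apply: val_inj; rewrite emb_val.
by exists k; rewrite kC emb_val eqxx.
Qed.

Lemma embedE (S : {set {set ZD}}) : embed N S = [set emb @: C | C : {set ZD} in S].
Proof.
by apply/setP => X; apply/imsetP/imsetP => -[C CS ->]; exists C; rewrite ?embsetE.
Qed.

Lemma Hd_subgroup : is_subgroup Hd.
Proof.
apply/is_subgroupP; split=> [|x y|x]; rewrite !mem_Hd ?red0 //.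
  by rewrite red_add => /eqP -> /eqP ->; rewrite addr0.
by rewrite red_opp => /eqP ->; rewrite oppr0.
Qed.

Lemma Hd_neq1 : Hd != one_set N.
Proof.
have k1 : (1 < Dd)%N by rewrite ltnS.
apply: contraTneq (emb_Hd (Ordinal k1)) => ->.
by rewrite one_setE inE -emb0 (inj_eq emb_inj).
Qed.

Lemma lift_union_cosets (D : {set ZM}) : union_cosets Hd (lift D).
Proof.
apply/union_cosetsP => x y; rewrite !inE mem_Hd => xC /eqP ry.
by rewrite red_add ry addr0.
Qed.

Lemma coef_lift (C D : {set ZM}) g :
  coef (lift C) (lift D) g = (Dd * coef C D (red g))%N.
Proof.
rewrite !coefE; set Q := fun a => (a \in C) && ((red g - a)%R \in D).
transitivity #|[set x | Q (red x)]|; first by apply: eq_card => x; rewrite !inE red_sub.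
rewrite -sum1_card (partition_big red Q) => [|x]; last by rewrite inE.
rewrite (eq_bigr (fun _ => Dd)) => [|a Qa]; last first.
  rewrite -(card_red_fiber a) -sum1_card; apply: eq_bigl => x.
  by rewrite !inE; case: eqP => [->|]; rewrite ?Qa ?andbF.
by rewrite sum_nat_const mulnC; congr (_ * _)%N; apply: eq_card => a; rewrite inE.
Qed.

Lemma coef_emb (C D : {set ZD}) k : coef (emb @: C) (emb @: D) (emb k) = coef C D k.
Proof.
rewrite !coefE -(card_imset _ emb_inj); apply: eq_card => x; rewrite inE.
apply/andP/imsetP => [[/imsetP[j jC ->] xD]|[j]].
  by exists j; rewrite // inE jC -mem_emb emb_add emb_opp.
by rewrite inE => /andP[jC jD] ->; rewrite mem_emb -emb_opp -emb_add mem_emb.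
Qed.

Lemma coef_emb_out (C D : {set ZD}) g : g \notin Hd -> coef (emb @: C) (emb @: D) g = 0%N.
Proof.
move=> gH; rewrite coefE; apply/eqP; rewrite cards_eq0; apply/eqP/setP => x.
rewrite !inE; apply/negP => /andP[/imsetP[j _ ->] /imsetP[l _ el]].
have eg : g = (emb j + emb l)%R by rewrite -el addrC subrK.
by rewrite eg -emb_add emb_Hd in gH.
Qed.

Lemma coef_emb_lift (C : {set ZD}) (D : {set ZM}) g :
  coef (emb @: C) (lift D) g = if red g \in D then #|C| else 0%N.
Proof.
rewrite coefE; case: ifP => gD.
  rewrite -(card_imset _ emb_inj); apply: eq_card => x; rewrite !inE.
  by case: (boolP (x \in _)) => //= /imsetP[j _ ->]; rewrite red_sub red_emb subr0 gD.
apply/eqP; rewrite cards_eq0; apply/eqP/setP => x; rewrite !inE.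
by apply/negP => /andP[/imsetP[j _ ->]]; rewrite red_sub red_emb subr0 gD.
Qed.

Variable S : {set {set ZD}}.
Hypothesis schS : is_schur setT S.
Hypothesis primS : primitive setT S.

Let partS : partition S setT. Proof. by case: schS. Qed.

Lemma emb_primitive (P : {set {set ZN}}) X : partition P setT ->
  (forall C, C \in S -> emb @: C \in P) ->
  is_subgroup X -> X \subset Hd -> class_closed P X -> X = one_set N \/ X = Hd.
Proof.
move=> partP embP gX XH cX; set Y := emb @^-1: X.
have XY : X = emb @: Y.
  apply/setP => x; apply/idP/imsetP => [xX|[k]]; last by rewrite inE => kY ->.
  by case/imsetP: (subsetP XH x xX) => k _ ek; exists k; rewrite // inE -ek.
have sY : s_subgroup S Y.
  apply/(s_subgroupP partS); split.
    move/is_subgroupP: gX => [X0 XD XN]; apply/is_subgroupP.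
    by split=> [|k l|k]; rewrite !inE ?emb0 ?emb_add ?emb_opp //; [apply: XD | apply: XN].
  move=> k C; rewrite inE => kX CS kC.
  have /subsetP CX := cX (emb k) _ kX (embP C CS) (imset_f _ kC).
  by apply/subsetP => j jC; rewrite inE CX ?imset_f.
case: (primS sY) => [Y1|YT]; [left | right]; rewrite XY ?Y1 ?YT //.
by rewrite !one_setE imset_set1 emb0.
Qed.

Section WedgeExtension.
Variable T : {set {set ZM}}.
Hypothesis schT : is_schur setT T.

Let partT : partition T setT. Proof. by case: schT. Qed.

Definition wedge_ext : {set {set ZN}} :=
  [set emb @: C | C : {set ZD} in S] :|: [set lift D | D in [set D in T | D != one_set M]].

Lemma wedge_extP X : X \in wedge_ext <->
  (exists2 C, C \in S & X = emb @: C) \/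
  (exists2 D, (D \in T) && (D != one_set M) & X = lift D).
Proof.
rewrite inE; split=> [/orP[/imsetP[C CS ->]|/imsetP[D DT ->]]|[[C CS ->]|[D DT ->]]].
- by left; exists C.
- by rewrite inE in DT; right; exists D.
- by rewrite imset_f.
- by apply/orP; right; apply: imset_f; rewrite inE.
Qed.

Lemma emb_wedge_ext C : C \in S -> emb @: C \in wedge_ext.
Proof. by move=> CS; apply/wedge_extP; left; exists C. Qed.

Lemma lift_outside_Hd D x : D \in T -> D != one_set M -> x \in lift D -> x \notin Hd.
Proof.
move=> DT D1; rewrite inE mem_Hd => xD; apply: contra D1 => /eqP x0.
by apply/eqP/(schur_class0 schT DT); rewrite -x0.
Qed.

Lemma lift_nonempty D : D \in T -> exists x, x \in lift D.
Proof.
by case/(class_nonempty partT) => a aD; exists (inZp (val a)); rewrite inE red_inZp.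
Qed.

Lemma wedge_ext_partition : partition wedge_ext setT.
Proof.
apply/partition_setTP; split.
- apply/negP => /wedge_extP[[C CS C0]|[D /andP[DT _] D0]].
    case: (class_nonempty partS CS) => k kC.
    by move: (mem_emb C k); rewrite -C0 kC inE.
  by case: (lift_nonempty DT) => x; rewrite -D0 inE.
- move=> x; have [|rx] := boolP (x \in Hd).
    case/imsetP => k _ ->; case: (class_exists partS k) => C CS kC.
    by exists (emb @: C); rewrite ?emb_wedge_ext ?mem_emb.
  case: (class_exists partT (red x)) => D DT xD; exists (lift D); last by rewrite inE.
  apply/wedge_extP; right; exists D; rewrite // DT /=.
  by apply: contra rx => /eqP D1; move: xD; rewrite D1 one_setE inE mem_Hd.
- move=> B B' x /wedge_extP[[C CS ->]|[D /andP[DT D1] ->]]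
    /wedge_extP[[C' C'S ->]|[D' /andP[D'T D'1] ->]].
  + by case/imsetP => k kC -> kC'; rewrite (class_uniq partS CS C'S kC) -?mem_emb.
  + by move=> /imsetP[k _ ->] /(lift_outside_Hd D'T D'1); rewrite emb_Hd.
  + by move=> /(lift_outside_Hd DT D1) xH /imsetP[k _ ek]; rewrite ek emb_Hd in xH.
  + by rewrite !inE => xD xD'; rewrite (class_uniq partT DT D'T xD xD').
Qed.

Lemma inv_set_emb (C : {set ZD}) : inv_set (emb @: C) = emb @: inv_set C.
Proof.
apply/setP => x; rewrite inv_setE inE; apply/imsetP/imsetP => [[k kC ex]|[k]].
  by exists (- k)%R; rewrite ?inv_setE ?inE ?opprK // emb_opp -ex opprK.
by rewrite inv_setE inE => kC ->; exists (- k)%R; rewrite ?emb_opp.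
Qed.

Lemma inv_set_lift (D : {set ZM}) : inv_set (lift D) = lift (inv_set D).
Proof. by apply/setP => x; rewrite !inv_setE !inE red_opp. Qed.

(* For a class inside [Hd] the common class is {0}. *)
Lemma wedge_ext_red_class E g h : E \in wedge_ext -> g \in E -> h \in E ->
  exists2 E', E' \in T & (red g \in E') && (red h \in E').
Proof.
case: schT => _ oT _ _ _.
case/wedge_extP => [[E0 _ ->] /imsetP[g0 _ ->] /imsetP[h0 _ ->]|[E' /andP[E'T _] ->]].
  by exists (one_set M); rewrite // !red_emb one_setE inE.
by rewrite !inE => gE hE; exists E'; rewrite ?gE.
Qed.

Lemma wedge_ext_coef_const C D E g h :
  C \in wedge_ext -> D \in wedge_ext -> E \in wedge_ext -> g \in E -> h \in E ->
  coef C D g = coef C D h.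
Proof.
case: schS => _ _ _ _ cS; case: schT => _ _ _ _ cT.
move=> CP DP EP gE hE; have [E' E'T /andP[gE' hE']] := wedge_ext_red_class EP gE hE.
have memD (D' : {set ZM}) : D' \in T -> (red g \in D') = (red h \in D').
  by move=> D'T; exact: (mem_class_eq partT D'T E'T gE' hE').
case/wedge_extP: CP => [[C0 C0S ->]|[C' /andP[C'T _] ->]];
case/wedge_extP: DP => [[D0 D0S ->]|[D' /andP[D'T _] ->]].
- case/wedge_extP: EP gE hE => [[E0 E0S ->] /imsetP[g0 gE0 ->] /imsetP[h0 hE0 ->]|].
    by rewrite !coef_emb (cS C0 D0 E0 g0 h0).
  case=> E'' /andP[E''T E''1] -> gE hE.
  by rewrite !coef_emb_out ?(lift_outside_Hd E''T E''1).
- by rewrite !coef_emb_lift memD.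
- by rewrite coefC [RHS]coefC !coef_emb_lift memD.
- by rewrite !coef_lift (cT C' D' E' _ _ C'T D'T E'T gE' hE').
Qed.

Lemma wedge_ext_schur : is_schur setT wedge_ext.
Proof.
case: schS => _ oS iS _ _; case: schT => _ _ iT _ _.
split=> [||X||]; first exact: wedge_ext_partition.
- by rewrite (_ : one_set N = emb @: one_set Dd) ?emb_wedge_ext // !one_setE imset_set1 emb0.
- case/wedge_extP => [[C CS ->]|[D /andP[DT D1] ->]].
    by rewrite inv_set_emb emb_wedge_ext ?iS.
  apply/wedge_extP; right; exists (inv_set D); rewrite ?inv_set_lift // iT //=.
  by apply: contra D1 => /eqP h; rewrite -[D]inv_setK h inv_set_one.
- by move=> C D g _ _; rewrite inE.
- exact: wedge_ext_coef_const.
Qed.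

Lemma restr_wedge_ext : restr wedge_ext Hd = [set emb @: C | C : {set ZD} in S].
Proof.
apply/setP => X; rewrite inE; apply/andP/imsetP => [[]|[C CS ->]].
  case/wedge_extP => [[C CS ->] _|[D /andP[DT D1] ->] DH]; first by exists C.
  case: (lift_nonempty DT) => x xD.
  by move: (lift_outside_Hd DT D1 xD); rewrite (subsetP DH).
by rewrite emb_wedge_ext //; split=> //; apply/subsetP => x /imsetP[k _ ->]; apply: emb_Hd.
Qed.

Lemma class_closed_Hd : class_closed wedge_ext Hd.
Proof.
move=> x X xH /wedge_extP[[C _ ->] _|[D /andP[DT D1] ->] /(lift_outside_Hd DT D1)].
  by apply/subsetP => y /imsetP[k _ ->]; apply: emb_Hd.
by rewrite xH.
Qed.

Let partP := wedge_ext_partition.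

Lemma s_subgroup_Hd : s_subgroup wedge_ext Hd.
Proof. by apply/(s_subgroupP partP); split; [apply: Hd_subgroup | apply: class_closed_Hd]. Qed.

Lemma wedge_ext_core_cand : core_cand wedge_ext Hd.
Proof.
split; first exact: s_subgroup_Hd.
  case=> K [L [[sK sL K1 KL LH] _]].
  case/(s_subgroup_restrP partP): sK => gK cK KH.
  case/(s_subgroup_restrP partP): sL => _ _ LH'.
  case: (emb_primitive partP emb_wedge_ext gK KH cK) => [K0|KH'].
    by rewrite K0 eqxx in K1.
  by move: LH; rewrite eqEsubset LH' -KH' KL.
split=> [C|C CP]; first by rewrite inE => /andP[CP _]; apply: in_omega_span_mem.
case/wedge_extP: (CP) => [[C0 C0S eC]|[D _ ->]].
  by apply: in_omega_span_mem; rewrite restr_wedge_ext eC imset_f.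
by rewrite (omega_union_cosets Hd_subgroup Hd_neq1 (lift_union_cosets (D := D))); apply: in_omega_span0.
Qed.

(* An element of [H'] outside [Hd] lies in a lifted class, a union of
   [Hd]-cosets, so [Hd] is a proper subgroup of [H'] and [K = L = Hd] is a wedge
   decomposition of the restriction to [H']. *)
Lemma wedge_ext_core_max H' : core_cand wedge_ext H' -> H' \subset Hd.
Proof.
case=> /(s_subgroupP partP) [gH' cH'] nw _; apply/subsetP => x xH'.
apply/negPn/negP => xH.
case: (class_exists partP x) => X XP xX; have XH' := cH' x X xH' XP xX.
case/wedge_extP: (XP) => [[C _ eX]|[D _ eX]].
  by move: xX; rewrite eX => /imsetP[k _ ek]; rewrite ek emb_Hd in xH.
have HH' : Hd \subset H'.
  apply: (subgroup_shift_subset (h := x)) => // y yH; apply: (subsetP XH').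
  by move: (lift_union_cosets (D := D)); rewrite -eX => /union_cosetsP; apply.
apply: nw; exists Hd, Hd; split.
  have sHr : s_subgroup (restr wedge_ext H') Hd.
    by apply/(s_subgroup_restrP partP); split; [apply: Hd_subgroup|apply: class_closed_Hd|].
  by rewrite Hd_neq1; split=> //; apply: contraNneq xH => ->.
move=> C; rewrite inE => /andP[/wedge_extP[[C0 _ ->]|[D' _ ->]] _].
  by left; apply/subsetP => y /imsetP[k _ ->]; apply: emb_Hd.
by right; apply: lift_union_cosets.
Qed.

Lemma wedge_ext_core : wedge_core_grp wedge_ext Hd.
Proof. by split; [apply: wedge_ext_core_cand | apply: wedge_ext_core_max]. Qed.

End WedgeExtension.

Lemma red_emb_set C : C \in S -> red @: (emb @: C) = one_set M.
Proof.
case/(class_nonempty partS) => k kC; apply/setP => a; rewrite one_setE inE.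
apply/imsetP/eqP => [[x /imsetP[j _ ->] ->]|->]; first exact: red_emb.
by exists (emb k); rewrite ?imset_f ?red_emb.
Qed.

Lemma red_lift (D : {set ZM}) : red @: lift D = D.
Proof.
apply/setP => a; apply/imsetP/idP => [[x] |aD]; first by rewrite inE => xD ->.
by exists (inZp (val a)); rewrite ?inE red_inZp.
Qed.

Section WedgeCore.
Variable P : {set {set ZN}}.
Hypothesis schP : is_schur setT P.
Variable H : {set ZN}.
Hypothesis coreH : wedge_core_grp P H.
Hypothesis restrH : restr P H = embed N S.

Let partP : partition P setT. Proof. by case: schP. Qed.

Lemma restr_core : restr P H = [set emb @: C | C : {set ZD} in S].
Proof. by rewrite restrH embedE. Qed.

Lemma emb_core_class C : C \in S -> emb @: C \in P.
Proof.
move=> CS; have : emb @: C \in restr P H by rewrite restr_core imset_f.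
by rewrite inE => /andP[].
Qed.

Lemma core_Hd : H = Hd.
Proof.
have [[/(s_subgroupP partP) [_ cH] _ _] _] := coreH.
apply/setP => x; apply/idP/imsetP => [xH|[k _ ->]].
  case: (class_exists partP x) => C CP xC.
  have : C \in restr P H by rewrite inE CP (cH x C).
  by rewrite restr_core => /imsetP[C0 _ eC]; move: xC; rewrite eC => /imsetP[k _ ->]; exists k.
case: (class_exists partS k) => C CS kC.
have : emb @: C \in restr P H by rewrite restr_core imset_f.
by rewrite inE => /andP[_ /subsetP]; apply; rewrite mem_emb.
Qed.

Lemma class_closed_core : class_closed P Hd.
Proof. by have [[sH _ _] _] := coreH; rewrite core_Hd in sH; case/(s_subgroupP partP): sH. Qed.

Lemma union_cosets_core C : C \in P -> ~~ (C \subset Hd) -> union_cosets Hd C.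
Proof.
have [[sH _ _] Hmax] := coreH; rewrite core_Hd in sH Hmax.
apply: (cosets_outside_core partP sH Hd_neq1 _ Hmax) => X.
exact: emb_primitive partP emb_core_class.
Qed.

Lemma core_classes C : C \in P ->
  (exists2 C0, C0 \in S & C = emb @: C0) \/
  [/\ C = lift (red @: C), red @: C != one_set M & forall x, x \in C -> x \notin Hd].
Proof.
move=> CP; have [CH|CH] := boolP (C \subset Hd).
  left; have : C \in restr P H by rewrite inE CP core_Hd CH.
  by rewrite restr_core => /imsetP[C0 C0S ->]; exists C0.
have nH x : x \in C -> x \notin Hd.
  by move=> xC; apply: contra CH => xH; apply: class_closed_core xH CP xC.
right; split=> //.
  apply/setP => y; rewrite inE; apply/idP/imsetP => [yC|[x xC /red_eq_translate[k ->]]].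
    by exists y.
  by have /union_cosetsP := union_cosets_core CP CH; apply; rewrite ?emb_Hd.
case: (class_nonempty partP CP) => x xC; apply: contra (nH x xC) => /eqP h.
have : red x \in red @: C by rewrite imset_f.
by rewrite h one_setE inE mem_Hd.
Qed.

Definition quot_ring : {set {set ZM}} := [set red @: C | C : {set ZN} in P].

Lemma quot_ring_partition : partition quot_ring setT.
Proof.
apply/partition_setTP; split.
- apply/negP => /imsetP[C CP C0]; case: (class_nonempty partP CP) => x xC.
  by move: (imset_f red xC); rewrite -C0 inE.
- move=> a; case: (class_exists partP (inZp (val a))) => C CP xC.
  by exists (red @: C); [rewrite imset_f | rewrite -(red_inZp a) imset_f].
move=> B B' a /imsetP[C CP ->] /imsetP[D DP ->] /imsetP[x xC ->] /imsetP[y yD exy].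
case: (core_classes CP) => [[C0 C0S eC]|[eC _ nC]];
case: (core_classes DP) => [[D0 D0S eD]|[eD _ nD]].
- by rewrite eC eD !red_emb_set.
- move: (nD y yD); rewrite mem_Hd -exy; move: xC; rewrite eC => /imsetP[k _ ->].
  by rewrite red_emb eqxx.
- move: (nC x xC); rewrite mem_Hd exy; move: yD; rewrite eD => /imsetP[k _ ->].
  by rewrite red_emb eqxx.
- have yC : y \in C by rewrite eC inE -exy imset_f.
  by rewrite (class_uniq partP CP DP yC yD).
Qed.

Lemma wedge_ext_quot_ring : wedge_ext quot_ring = P.
Proof.
apply/setP => X; apply/idP/idP => [|XP].
  case/wedge_extP => [[C0 C0S ->]|[D /andP[/imsetP[C CP ->] C1] ->]].
    exact: emb_core_class.
  case: (core_classes CP) => [[C0 C0S eC]|[<- //]].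
  by rewrite eC red_emb_set ?eqxx in C1.
apply/wedge_extP; case: (core_classes XP) => [|[eX X1 _]]; first by left.
by right; exists (red @: X); rewrite ?imset_f.
Qed.

Lemma inv_set_red (C : {set ZN}) : inv_set (red @: C) = red @: inv_set C.
Proof.
apply/setP => a; rewrite inv_setE inE; apply/imsetP/imsetP => [[x xC ea]|[y]].
  by exists (- x)%R; rewrite ?inv_setE ?inE ?opprK // red_opp -ea opprK.
by rewrite inv_setE inE => yC ->; exists (- y)%R; rewrite ?red_opp.
Qed.

Lemma quot_ring_coef_const C D E g h :
  C \in quot_ring -> D \in quot_ring -> E \in quot_ring -> g \in E -> h \in E ->
  coef C D g = coef C D h.
Proof.
case: schP => _ _ _ _ cP.
have emb_case C' D' E' g' h' : (exists2 C0, C0 \in S & C' = emb @: C0) ->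
    D' \in quot_ring -> E' \in quot_ring -> g' \in E' -> h' \in E' ->
    coef (red @: C') D' g' = coef (red @: C') D' h'.
  move=> [C0 C0S ->] D'Q E'Q gE hE.
  by rewrite red_emb_set // !coef_one_set (mem_class_eq quot_ring_partition D'Q E'Q gE hE).
move=> /imsetP[C' C'P ->] /imsetP[D' D'P ->] EQ gE hE.
case: (core_classes C'P) => [hC|[eC _ _]]; first by apply: (emb_case _ _ E _ _ hC); rewrite ?imset_f.
case: (core_classes D'P) => [hD|[eD _ _]].
  by rewrite coefC [RHS]coefC; apply: (emb_case _ _ E _ _ hD); rewrite ?imset_f.
case/imsetP: EQ gE hE => [E' E'P ->] /imsetP[x xE ->] /imsetP[y yE ->].
have := cP C' D' E' x y C'P D'P E'P xE yE.
by rewrite eC eD !coef_lift -eC -eD => /eqP; rewrite eqn_mul2l => /eqP.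
Qed.

Lemma quot_ring_schur : is_schur setT quot_ring.
Proof.
case: schP => _ oP iP _ _.
split=> [||X||]; first exact: quot_ring_partition.
- by rewrite (_ : one_set M = red @: one_set N) ?imset_f // !one_setE imset_set1 red0.
- by case/imsetP => C CP ->; rewrite inv_set_red imset_f ?iP.
- by move=> C D g _ _; rewrite inE.
- exact: quot_ring_coef_const.
Qed.

End WedgeCore.

Lemma quot_ring_wedge_ext T : is_schur setT T -> quot_ring (wedge_ext T) = T.
Proof.
move=> schT; case: schS => _ oS _ _ _; case: schT => _ oT _ _ _.
apply/setP => X; apply/imsetP/idP => [[C /wedge_extP[[C0 C0S ->]|[D /andP[DT _] ->]] ->]|XT].
- by rewrite red_emb_set.
- by rewrite red_lift.
have [X1|X1] := eqVneq X (one_set M).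
  by exists (emb @: one_set Dd); rewrite ?emb_wedge_ext ?red_emb_set.
by exists (lift X); rewrite ?red_lift //; apply/wedge_extP; right; exists X; rewrite ?XT.
Qed.

Lemma Omega_core_eq : Omega_core N S = Omega M.
Proof.
rewrite /Omega_core /Omega; set A := [set T : {set {set ZM}} | pb (is_schur setT T)].
have -> : [set P : {set {set ZN}} | pb (is_schur setT P /\
      exists H, wedge_core_grp P H /\ restr P H = embed N S)] = wedge_ext @: A.
  apply/setP => P; rewrite inE; apply/pbP/imsetP => [[schP [H [coreH rH]]]|[T]].
    exists (quot_ring P); last by rewrite (wedge_ext_quot_ring schP coreH rH).
    by rewrite inE; apply/pbP; apply: (quot_ring_schur schP coreH rH).
  rewrite inE => /pbP schT ->; split; first exact: wedge_ext_schur.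
  exists Hd; split; first exact: wedge_ext_core.
  by rewrite restr_wedge_ext // embedE.
rewrite card_in_imset // => T1 T2; rewrite !inE => /pbP s1 /pbP s2 e12.
by rewrite -(quot_ring_wedge_ext s1) e12 quot_ring_wedge_ext.
Qed.

End Quotient.

Theorem lemma3p1 (n d : nat) (S : {set {set 'I_d}}) :
  (0 < n)%N -> (1 < d)%N -> (d %| n)%N ->
  is_schur [set: 'I_d] S -> primitive [set: 'I_d] S ->
  Omega_core n S = Omega (n %/ d).
Proof.
case: n => // n' _; case: d S => // d' S d_gt1 dvd_dn schS primS.
have : (0 < n'.+1 %/ d'.+1)%N by rewrite divn_gt0 // dvdn_leq.
case Em: (n'.+1 %/ d'.+1) => [|m'] // _.
have en : n'.+1 = (d'.+1 * m'.+1)%N by rewrite -Em mulnC divnK.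
exact: (Omega_core_eq en d_gt1 schS primS).
Qed.
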